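(* Let $\alpha=(a_1,a_2,\dots,a_w)$ and $\alpha^-=(a_2,\dots,a_w)$. Let $a_i$ with $i\ge2$ lie in $\mathbb{L}^t_\alpha$. Then: (1) if $un^{t-1}_\alpha(a_i)=a_1$, then $RL_{\alpha^-}(a_i)=RL_\alpha(a_i)-1$; (2) if $un^{t-1}_\alpha(a_i)\ne a_1$, then $RL_{\alpha^-}(a_i)=RL_\alpha(a_i)$.
   Context: Sequences consist of real numbers. Items are identified with their original positions, and items of $\alpha^-$ keep their indices from $\alpha$. Increasing subsequences are non-strict: indices strictly increase and values satisfy $\le$. For a sequence $\gamma$, $RL_\gamma(a)$ is the maximum length of an increasing subsequence of $\gamma$ ending at $a$. $\mathbb{L}^t_\gamma$ is the list of items of $\gamma$ with rising length $t$, ordered by position. The up neighbor $un_\alpha(a_i)$ is the item $a_j$ with the largest $j<i$ and $RL_\alpha(a_j)=RL_\alpha(a_i)-1$. Further, $un^0_\alpha(a)=a$ and $un^k_\alpha(a)=un_\alpha(un^{k-1}_\alpha(a))$. *)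

(* Sequences of reals are modelled as [seq R] for an
   arbitrary [R : realDomainType] (this includes the reals; only the order
   is used). Positions are 0-based: item a_(k+1) of the paper is index k. *)
From HB Require Import structures.
From mathcomp Require Import all_boot all_order all_algebra.
Set Implicit Arguments. Unset Strict Implicit. Unset Printing Implicit Defensive.
Import Order.TTheory GRing.Theory Num.Theory.
Local Open Scope ring_scope.

Section Defs.
Variable R : realDomainType.

Definition inc_subseq (s : seq R) (idx : seq nat) : bool :=
  [&& sorted ltn idx, all (fun k => (k < size s)%N) idx &
      sorted (fun j k => nth 0 s j <= nth 0 s k) idx].

Definition RL (s : seq R) (i : nat) : nat :=
  \max_(m : (i.+1).-tuple bool |
          inc_subseq s (mask m (iota 0 i.+1)) &&
          (last i.+1 (mask m (iota 0 i.+1)) == i))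
    size (mask m (iota 0 i.+1)).

Definition un (s : seq R) (i : nat) : option nat :=
  let c := [seq j <- iota 0 i | RL s j == (RL s i).-1] in
  if c is [::] then None else Some (last 0%N c).

Definition un_iter (s : seq R) (k i : nat) : option nat :=
  iter k (fun o => obind (un s) o) (Some i).

End Defs.

From HB Require Import structures.
From mathcomp Require Import all_boot all_order all_algebra.
Set Implicit Arguments. Unset Strict Implicit. Unset Printing Implicit Defensive.
Import Order.TTheory GRing.Theory Num.Theory.

(* Increasing subsequences of alpha^- ending at a_i are exactly those of alpha
   ending at a_i that avoid a_1, so RL_alpha^-(a_i) <= RL_alpha(a_i), and
   dropping the first item of a longest one gives RL_alpha(a_i) - 1 <=
   RL_alpha^-(a_i).  Following up neighbours from a_i builds a longest
   increasing subsequence ending at a_i that starts at un^{t-1}(a_i); since up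
   neighbours are chosen as late as possible, every longest one starts at or
   before un^{t-1}(a_i).  Hence some longest subsequence avoids a_1 iff
   un^{t-1}(a_i) <> a_1. *)

Lemma path_leq_last x s : path leq x s -> {in x :: s, forall y, y <= last x s}.
Proof.
elim: s x => [|a s IHs] x /=; first by move=> _ y; rewrite inE => /eqP->.
case/andP=> le_xa path_as y; rewrite inE => /predU1P[->|ys].
  by apply: leq_trans le_xa _; apply: IHs; rewrite ?mem_head.
exact: IHs.
Qed.

Lemma sorted_ltn_subseq_iota n b :
  sorted ltn b -> all (fun k => k < n) b -> subseq b (iota 0 n).
Proof.
move=> sorted_b lt_b_n; apply/subseq_uniqP; first exact: iota_uniq.
apply: (@sorted_eq _ ltn ltn_trans).
- by move=> x y /andP[xy yx]; move: (ltn_trans xy yx); rewrite ltnn.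
- exact: sorted_b.
- exact/sorted_filter/iota_ltn_sorted/ltn_trans.
apply: uniq_perm; first exact: (sorted_uniq ltn_trans ltnn).
  by rewrite filter_uniq // iota_uniq.
move=> x; rewrite mem_filter mem_iota /=; case xb: (x \in b) => //=.
by rewrite (allP lt_b_n).
Qed.

Lemma sorted_rcons2 (T : Type) (e : rel T) b x y :
  sorted e (rcons (rcons b x) y) = sorted e (rcons b x) && e x y.
Proof.
case: b => [|a b] /=; first by rewrite andbT.
by rewrite rcons_path last_rcons.
Qed.

(* Chains are index lists; the default [i.+1] of [last] excludes the empty one. *)
Definition inc_chain (R : realDomainType) (s : seq R) (i : nat) (b : seq nat) :=
  inc_subseq s b && (last i.+1 b == i).

Section Chains.
Variables (R : realDomainType) (s : seq R).
Implicit Types (i j k c d n : nat) (b : seq nat).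

Lemma inc_chain_nil i : inc_chain s i [::] = false.
Proof. by rewrite /inc_chain /= (gtn_eqF (ltnSn i)). Qed.

Lemma inc_chain_mem i b : inc_chain s i b -> i \in b.
Proof.
case/lastP: b => [|b x]; first by rewrite inc_chain_nil.
by case/andP=> _; rewrite last_rcons => /eqP ->; rewrite mem_rcons mem_head.
Qed.

Lemma inc_chain_leq i b : inc_chain s i b -> {in b, forall y, y <= i}.
Proof.
case: b => [|x b]; first by rewrite inc_chain_nil.
case/andP=> /and3P[sorted_b _ _] /eqP /= <-.
apply: path_leq_last; apply: sub_path sorted_b => u v; exact: ltnW.
Qed.

Lemma inc_chain_ltn_size i b : inc_chain s i b -> i < size s.
Proof.
move=> chain_b; case/andP: (chain_b) => /and3P[_ /allP lt_b _] _.
exact/lt_b/inc_chain_mem.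
Qed.

Lemma inc_chain1 j : j < size s -> inc_chain s j [:: j].
Proof. by move=> lt_j; rewrite /inc_chain /inc_subseq /= lt_j eqxx. Qed.

Lemma inc_chain_rcons k j b :
  inc_chain s k b -> k < j -> j < size s -> (s`_k <= s`_j)%R ->
  inc_chain s j (rcons b j).
Proof.
case/lastP: b => [|b x]; first by rewrite inc_chain_nil.
case/andP=> /and3P[sorted_b lt_b sorted_val]; rewrite last_rcons => /eqP ?.
subst x => lt_kj lt_j le_kj.
rewrite /inc_chain /inc_subseq last_rcons eqxx andbT all_rcons lt_j lt_b.
by rewrite !sorted_rcons2 sorted_b sorted_val le_kj /= andbT; exact: lt_kj.
Qed.

Lemma inc_chain_rconsK k j b :
  inc_chain s j (rcons (rcons b k) j) ->
  [/\ inc_chain s k (rcons b k), k < j & (s`_k <= s`_j)%R].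
Proof.
case/andP=> /and3P[]; rewrite !sorted_rcons2 all_rcons.
move=> /andP[sorted_b lt_kj] /andP[_ lt_b] /andP[sorted_val le_kj] _.
by rewrite /inc_chain /inc_subseq sorted_b lt_b sorted_val last_rcons eqxx.
Qed.

Lemma chain_size_leq_RL i b : inc_chain s i b -> size b <= RL s i.
Proof.
move=> chain_b; have le_b_i := inc_chain_leq chain_b.
case/andP: (chain_b) => /and3P[sorted_b _ _] _.
have /subseqP[m size_m def_b] : subseq b (iota 0 i.+1).
  by apply: sorted_ltn_subseq_iota => //; apply/allP => y /le_b_i.
have size_m' : size m == i.+1 by rewrite size_m size_iota.
rewrite /RL def_b.
by apply: (leq_bigmax_cond (Tuple size_m')); rewrite /= -def_b.
Qed.

Lemma RL_attained i : i < size s -> exists2 b, inc_chain s i b & size b = RL s i.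
Proof.
move=> lt_i.
pose P (m : (i.+1).-tuple bool) :=
  inc_chain s i (mask m (iota 0 i.+1)).
have size_m : size (nseq i false ++ [:: true]) == i.+1.
  by rewrite size_cat size_nseq addn1.
have P_m : P (Tuple size_m).
  rewrite /P; have -> : iota 0 i.+1 = iota 0 i ++ [:: i] by rewrite -addn1 iotaD.
  rewrite /= mask_cat ?size_nseq ?size_iota // mask_false /=.
  by rewrite /inc_chain /inc_subseq /= lt_i eqxx.
rewrite /RL (bigop.bigmax_eq_arg (Tuple size_m) P_m).
by case: arg_maxnP => //= m ? _; exists (mask m (iota 0 i.+1)).
Qed.

Lemma inc_chain_split j b :
  inc_chain s j b -> 1 < size b -> exists b' k, b = rcons (rcons b' k) j.
Proof.
case/lastP: b => [|b x]; first by rewrite inc_chain_nil.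
case/andP=> _; rewrite last_rcons => /eqP ->.
by case/lastP: b => [|b' k] //; exists b', k.
Qed.

Lemma RL_gt0 j : j < size s -> 0 < RL s j.
Proof. by move=> lt_j; apply: chain_size_leq_RL (inc_chain1 lt_j). Qed.

Lemma ltn_RL k j :
  k < j -> j < size s -> (s`_k <= s`_j)%R -> RL s k < RL s j.
Proof.
move=> lt_kj lt_j le_kj.
have [b chain_b <-] := RL_attained (ltn_trans lt_kj lt_j).
by rewrite -(size_rcons b j) chain_size_leq_RL // (inc_chain_rcons chain_b).
Qed.

Lemma RL_pred_witness j : j < size s -> 1 < RL s j ->
  exists k, [/\ k < j, (s`_k <= s`_j)%R & RL s k = (RL s j).-1].
Proof.
move=> lt_j gt1_RL; have [b chain_b size_b] := RL_attained lt_j.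
have [|b' [k def_b]] := inc_chain_split chain_b; first by rewrite size_b.
rewrite {}def_b in chain_b size_b.
have [chain_k lt_kj le_kj] := inc_chain_rconsK chain_b.
exists k; split => //; apply/eqP; rewrite eqn_leq -ltnS prednK ?RL_gt0 //.
rewrite ltn_RL //= -size_b size_rcons /=; exact: chain_size_leq_RL.
Qed.

Lemma unP j c : un s j = Some c ->
  [/\ c < j, RL s c = (RL s j).-1 &
      forall k, k < j -> RL s k = (RL s j).-1 -> k <= c].
Proof.
rewrite /un; set l := filter _ _.
have mem_l k : (k \in l) = (RL s k == (RL s j).-1) && (k < j).
  by rewrite mem_filter mem_iota.
case def_l : l => [|x l'] //= [<-].
have sorted_l : sorted leq (x :: l').
  rewrite -def_l (sub_sorted (fun _ _ => @ltnW _ _)) //.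
  exact/sorted_filter/iota_ltn_sorted/ltn_trans.
have := mem_last x l'; rewrite -def_l mem_l => /andP[/eqP RL_last lt_last].
split=> // k lt_kj RL_k; apply: (path_leq_last sorted_l).
by rewrite -def_l mem_l RL_k eqxx.
Qed.

Lemma un_exists j k :
  k < j -> RL s k = (RL s j).-1 -> exists c, un s j = Some c.
Proof.
move=> lt_kj RL_k; rewrite /un; set l := filter _ _.
case def_l : l => [|x l'] /=; last by exists (last x l').
have : k \in l by rewrite mem_filter mem_iota RL_k eqxx.
by rewrite def_l.
Qed.

Lemma un_iterSr n c c' : un s c = Some c' -> un_iter s n.+1 c = un_iter s n c'.
Proof. by move=> un_c; rewrite /un_iter iterSr /= un_c. Qed.

Lemma un_le j c : j < size s -> un s j = Some c -> (s`_c <= s`_j)%R.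
Proof.
move=> lt_j /unP[lt_cj RL_c max_c].
have lt_c : c < size s := ltn_trans lt_cj lt_j.
have gt1_RL : 1 < RL s j.
  by have := RL_gt0 lt_c; rewrite RL_c; case: (RL s j) => [|[]].
have [k [lt_kj le_kj RL_k]] := RL_pred_witness lt_j gt1_RL.
have := max_c k lt_kj RL_k; rewrite leq_eqVlt => /predU1P[<- // | lt_kc].
suff /ltW le_ck : (s`_c < s`_k)%R by apply: le_trans le_ck le_kj.
rewrite ltNge; apply/negP => le_kc.
by have := ltn_RL lt_kc lt_c le_kc; rewrite RL_k RL_c ltnn.
Qed.

Lemma un_iter_chain n j : j < size s -> RL s j = n.+1 ->
  exists c b, [/\ un_iter s n j = Some c, inc_chain s j (c :: b) & size b = n].
Proof.
elim: n j => [|n IHn] j lt_j RL_j.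
  by exists j, [::]; split; rewrite ?inc_chain1.
have [|k [lt_kj _ RL_k]] := RL_pred_witness lt_j; first by rewrite RL_j.
have [c' un_j] := un_exists lt_kj RL_k.
have [lt_c'j RL_c' _] := unP un_j.
have lt_c' := ltn_trans lt_c'j lt_j.
have [c [b [un_c' chain_c' size_b]]] := IHn c' lt_c' (etrans RL_c' (congr1 predn RL_j)).
exists c, (rcons b j); split; first by rewrite (un_iterSr _ un_j).
  by rewrite -rcons_cons (inc_chain_rcons chain_c' lt_c'j lt_j (un_le lt_j un_j)).
by rewrite size_rcons size_b.
Qed.

Lemma head_le_un_iter n c j b d :
  inc_chain s j b -> size b = n.+1 -> RL s j = n.+1 ->
  j <= c -> RL s c = n.+1 -> un_iter s n c = Some d -> head 0 b <= d.
Proof.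
elim: n c j b => [|n IHn] c j b chain_b size_b RL_j le_jc RL_c.
  case: b chain_b size_b => [|x []] // chain_b _ [<-].
  by case/andP: chain_b => _ /eqP /= ->.
have [|b' [k def_b]] := inc_chain_split chain_b; first by rewrite size_b.
rewrite {}def_b in chain_b size_b *.
have [chain_k lt_kj le_kj] := inc_chain_rconsK chain_b.
have size_k : size (rcons b' k) = n.+1 by move: size_b; rewrite size_rcons => -[].
have RL_k : RL s k = n.+1.
  apply/eqP; rewrite eqn_leq -ltnS -RL_j -{1}size_k chain_size_leq_RL //.
  by rewrite ltn_RL // (inc_chain_ltn_size chain_b).
have lt_kc := leq_trans lt_kj le_jc.
have [c' un_c] := un_exists lt_kc (etrans RL_k (esym (congr1 predn RL_c))).
have [_ RL_c' max_c'] := unP un_c.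
have -> : head 0 (rcons (rcons b' k) j) = head 0 (rcons b' k) by case: (b').
rewrite (un_iterSr _ un_c).
apply: (IHn c' k) => //; last by rewrite RL_c' RL_c.
by apply: max_c' => //; rewrite RL_k RL_c.
Qed.

Lemma inc_chain_behead i b : inc_chain (behead s) i b = inc_chain s i.+1 (map S b).
Proof.
rewrite /inc_chain /inc_subseq sorted_map all_map sorted_map (last_map S b i.+1).
by case: s => [|x s'] //; case: b.
Qed.

End Chains.

Section Behead.
Variables (R : realDomainType) (s : seq R).
Implicit Types (i : nat) (b : seq nat).

Lemma inc_chain_unshift i b :
  inc_chain s i b -> 0 < head 0 b -> inc_chain (behead s) i.-1 (map predn b).
Proof.
case: b => [|x b]; first by rewrite inc_chain_nil.
move=> chain_b; rewrite [head _ _]/= => gt0_x.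
have gt0_b : all (fun y => 0 < y) (x :: b).
  case/andP: (chain_b) => /and3P[sorted_b _ _] _.
  rewrite /= gt0_x; apply: sub_all (order_path_min ltn_trans sorted_b) => y.
  exact: ltn_trans.
have gt0_i : 0 < i := allP gt0_b _ (inc_chain_mem chain_b).
rewrite inc_chain_behead prednK // -map_comp.
suff -> : map (S \o predn) (x :: b) = x :: b by [].
by rewrite -[RHS]map_id; apply/eq_in_map => y /(allP gt0_b) /prednK.
Qed.

Lemma chain_size_leq_RL_behead i b :
  inc_chain s i b -> 0 < head 0 b -> size b <= RL (behead s) i.-1.
Proof.
by move=> chain_b gt0_b; rewrite -(size_map predn) chain_size_leq_RL ?inc_chain_unshift.
Qed.

Lemma RL_behead_attained i : 0 < i -> i < size s ->
  exists2 b, inc_chain s i b & size b = RL (behead s) i.-1 /\ 0 < head 0 b.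
Proof.
move=> gt0_i lt_i.
have [|b chain_b size_b] := @RL_attained R (behead s) i.-1.
  by rewrite size_behead ltn_predRL prednK.
rewrite inc_chain_behead prednK // in chain_b.
exists (map S b) => //; rewrite size_map; split=> //.
by case: b chain_b {size_b} => [|x b]; rewrite ?inc_chain_nil.
Qed.

Lemma RL_behead_le i : 0 < i -> i < size s -> RL (behead s) i.-1 <= RL s i.
Proof.
move=> gt0_i lt_i; have [b chain_b [<- _]] := RL_behead_attained gt0_i lt_i.
exact: chain_size_leq_RL.
Qed.

Lemma RL_pred_leq_behead i : i < size s -> (RL s i).-1 <= RL (behead s) i.-1.
Proof.
move=> lt_i; have [b chain_b <-] := RL_attained lt_i.
case: b chain_b => [|x [|y b]] chain_b //.
have [lt_xy chain_yb] : x < y /\ inc_chain s i (y :: b).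
  move: chain_b; rewrite /inc_chain /inc_subseq /=.
  by case/andP=> /and3P[/andP[-> ->] /andP[_ ->] /andP[_ ->]] ->.
exact: chain_size_leq_RL_behead chain_yb (leq_ltn_trans (leq0n x) lt_xy).
Qed.

Lemma RL_behead_lt i : 0 < i -> i < size s ->
  un_iter s (RL s i).-1 i = Some 0 -> RL (behead s) i.-1 < RL s i.
Proof.
move=> gt0_i lt_i un0.
have [b chain_b [size_b gt0_b]] := RL_behead_attained gt0_i lt_i.
rewrite ltn_neqAle -size_b chain_size_leq_RL // andbT; apply/eqP => eq_size.
have := @head_le_un_iter R s (RL s i).-1 i i b 0 chain_b.
rewrite prednK ?RL_gt0 // => /(_ eq_size erefl (leqnn i) erefl un0).
by rewrite leqNgt gt0_b.
Qed.

Lemma RL_behead_ge i : i < size s ->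
  un_iter s (RL s i).-1 i <> Some 0 -> RL s i <= RL (behead s) i.-1.
Proof.
move=> lt_i un_ne0; have gt0_RL := RL_gt0 lt_i.
have [c [b [un_c chain_c size_b]]] := un_iter_chain lt_i (esym (prednK gt0_RL)).
rewrite -(prednK gt0_RL) -size_b; apply: (chain_size_leq_RL_behead chain_c).
by rewrite /= lt0n; apply: contra_not_neq un_ne0 => c0; rewrite un_c c0.
Qed.

End Behead.

Theorem theorem3 (R : realDomainType) (alpha : seq R) (i t : nat)
  (hi : (1 <= i < size alpha)%N) (hL : RL alpha i = t) :
  (un_iter alpha t.-1 i = Some 0%N ->
     RL (behead alpha) i.-1 = (RL alpha i).-1) /\
  (un_iter alpha t.-1 i <> Some 0%N ->
     RL (behead alpha) i.-1 = RL alpha i).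
Proof.
case/andP: hi => gt0_i lt_i; subst t; split=> un_i; apply/eqP; rewrite eqn_leq.
  by rewrite RL_pred_leq_behead // andbT -ltnS prednK ?RL_gt0 // RL_behead_lt.
by rewrite RL_behead_le // RL_behead_ge.
Qed.
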